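(* Let $A\in\mathbb{C}^{m\times n}$ have rank $r$, $B\in\mathbb{C}^{m\times n}$ have rank $s$, and $E=B-A$. Then $$\|B^{\dagger}-A^{\dagger}\|_{F}^{2}\geq\max\big\{\gamma'_{1}+\|B^{\dagger}EA^{\dagger}\|_{F}^{2},\ \gamma'_{2}+\|A^{\dagger}EB^{\dagger}\|_{F}^{2}\big\},$$ where $$\gamma'_{1}:=\frac{\|A^{\dagger}E\|_{F}^{2}-\|B\|_{2}^{2}\|A^{\dagger}EB^{\dagger}\|_{F}^{2}}{\|A\|_{2}^{2}}+\frac{\|EB^{\dagger}\|_{F}^{2}-\|A\|_{2}^{2}\|A^{\dagger}EB^{\dagger}\|_{F}^{2}}{\|B\|_{2}^{2}},$$ $$\gamma'_{2}:=\frac{\|EA^{\dagger}\|_{F}^{2}-\|B\|_{2}^{2}\|B^{\dagger}EA^{\dagger}\|_{F}^{2}}{\|A\|_{2}^{2}}+\frac{\|B^{\dagger}E\|_{F}^{2}-\|A\|_{2}^{2}\|B^{\dagger}EA^{\dagger}\|_{F}^{2}}{\|B\|_{2}^{2}}.$$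
   Context: $M^{\dagger}$ denotes the Moore–Penrose inverse of $M$, $\|\cdot\|_{2}$ the spectral norm and $\|\cdot\|_{F}$ the Frobenius norm. *)

From HB Require Import structures.
From mathcomp Require Import all_boot all_order all_algebra.
From mathcomp Require Import classical_sets reals.
From mathcomp Require Import complex.
Set Implicit Arguments. Unset Strict Implicit. Unset Printing Implicit Defensive.
Import Order.TTheory GRing.Theory Num.Theory.
Local Open Scope ring_scope.

Definition ctrmx (R : rcfType) m n (A : 'M[R[i]]_(m, n)) : 'M[R[i]]_(n, m) :=
  \matrix_(i, j) (A j i)^*.

(* Moore-Penrose inverse: X is the (unique) matrix satisfying the four
   Penrose equations. *)
Definition is_pinv (R : rcfType) m n (A : 'M[R[i]]_(m, n)) (X : 'M[R[i]]_(n, m)) : Prop :=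
  [/\ A *m X *m A = A, X *m A *m X = X,
      ctrmx (A *m X) = A *m X & ctrmx (X *m A) = X *m A].

Definition frob (R : rcfType) m n (A : 'M[R[i]]_(m, n)) : R :=
  Num.sqrt (\sum_(i < m) \sum_(j < n) (ComplexField.Normc.normc (A i j)) ^+ 2).

Definition spec (R : realType) m n (A : 'M[R[i]]_(m, n)) : R :=
  reals.sup [set frob (A *m x) | x in [set x : 'cV[R[i]]_n | frob x <= 1]]%classic.

(* Write B† - A† = - B† E A† + B† (I - A A†) - (I - B† B) A†.  The Penrose equations
   make the three terms pairwise orthogonal for the Frobenius inner product, so their
   squared norms add up.  Splitting A† E = A† E B† B + A† E (I - B† B), where
   A† E (I - B† B) = - A† A (I - B† B), and using |XY|_F <= |X|_2 |Y|_F gives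
   |A† E|_F^2 <= |B|_2^2 |A† E B†|_F^2 + |A|_2^2 |(I - B† B) A†|_F^2, and symmetrically
   for E B† and B† (I - A A†).  This is the first lower bound; the second one is the
   first with A and B exchanged. *)

From HB Require Import structures.
From mathcomp Require Import all_boot all_order all_algebra.
From mathcomp Require Import classical_sets reals.
From mathcomp Require Import complex.
Set Implicit Arguments. Unset Strict Implicit. Unset Printing Implicit Defensive.
Import Order.TTheory GRing.Theory Num.Theory.
Local Open Scope ring_scope.

(* [y = 0] is allowed because [x / 0 = 0]; this is where [0 <= z] is needed. *)
Lemma ler_wpdivrMl (R : realFieldType) (x y z : R) :
  0 <= y -> 0 <= z -> x <= y * z -> x / y <= z.
Proof.
move=> y_ge0 z_ge0 x_le; have [-> | y_neq0] := eqVneq y 0; first by rewrite invr0 mulr0.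
by rewrite ler_pdivrMr 1?mulrC // lt_def y_neq0.
Qed.

Section ConjugateTranspose.
Variable R : rcfType.

Lemma ctrmxK m n (A : 'M[R[i]]_(m, n)) : ctrmx (ctrmx A) = A.
Proof. by apply/matrixP => i j; rewrite !mxE conjCK. Qed.

Lemma ctrmx0 m n : ctrmx (0 : 'M[R[i]]_(m, n)) = 0.
Proof. by apply/matrixP => i j; rewrite !mxE rmorph0. Qed.

Lemma ctrmx1 n : ctrmx (1%:M : 'M[R[i]]_n) = 1%:M.
Proof. by apply/matrixP => i j; rewrite !mxE rmorphMn rmorph1 eq_sym. Qed.

Lemma ctrmxD m n (A B : 'M[R[i]]_(m, n)) : ctrmx (A + B) = ctrmx A + ctrmx B.
Proof. by apply/matrixP => i j; rewrite !mxE rmorphD. Qed.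

Lemma ctrmxN m n (A : 'M[R[i]]_(m, n)) : ctrmx (- A) = - ctrmx A.
Proof. by apply/matrixP => i j; rewrite !mxE rmorphN. Qed.

Lemma ctrmxB m n (A B : 'M[R[i]]_(m, n)) : ctrmx (A - B) = ctrmx A - ctrmx B.
Proof. by rewrite ctrmxD ctrmxN. Qed.

Lemma ctrmxZ m n (c : R[i]) (A : 'M[R[i]]_(m, n)) :
  ctrmx (c *: A) = c^* *: ctrmx A.
Proof. by apply/matrixP => i j; rewrite !mxE rmorphM. Qed.

Lemma ctrmxM m n p (A : 'M[R[i]]_(m, n)) (B : 'M[R[i]]_(n, p)) :
  ctrmx (A *m B) = ctrmx B *m ctrmx A.
Proof.
apply/matrixP => i j; rewrite !mxE rmorph_sum; apply: eq_bigr => k _.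
by rewrite !mxE rmorphM mulrC.
Qed.

End ConjugateTranspose.

Definition frobsq (R : rcfType) m n (A : 'M[R[i]]_(m, n)) : R := frob A ^+ 2.

Section FrobeniusNorm.
Variable R : rcfType.

Lemma frob_ge0 m n (A : 'M[R[i]]_(m, n)) : 0 <= frob A.
Proof. exact: sqrtr_ge0. Qed.

Lemma frobsq_ge0 m n (A : 'M[R[i]]_(m, n)) : 0 <= frobsq A.
Proof. exact: sqr_ge0. Qed.

Lemma ler_frobsq m n p q (A : 'M[R[i]]_(m, n)) (B : 'M[R[i]]_(p, q)) :
  (frobsq A <= frobsq B) = (frob A <= frob B).
Proof. by rewrite ler_sqr ?nnegrE ?frob_ge0. Qed.

Lemma frobsqE m n (A : 'M[R[i]]_(m, n)) :
  (frobsq A)%:C%C = \sum_i \sum_j `|A i j| ^+ 2.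
Proof.
rewrite /frobsq /frob sqr_sqrtr; last by do 2!(apply: sumr_ge0 => ? _); exact: sqr_ge0.
rewrite rmorph_sum; apply: eq_bigr => i _; rewrite rmorph_sum; apply: eq_bigr => j _.
by rewrite rmorphXn.
Qed.

Lemma frobsq_tr m n (A : 'M[R[i]]_(m, n)) : (frobsq A)%:C%C = \tr (A *m ctrmx A).
Proof.
rewrite frobsqE /mxtrace; apply: eq_bigr => i _; rewrite !mxE; apply: eq_bigr => j _.
by rewrite mxE normCK.
Qed.

Lemma frobsq_eq0 m n (A : 'M[R[i]]_(m, n)) : frobsq A = 0 -> A = 0.
Proof.
move=> A0; apply/matrixP => i j; rewrite mxE.
have sq_ge0 k l : 0 <= `|A k l| ^+ 2 by rewrite exprn_ge0.
have /psumr_eq0P rowi0 : \sum_i \sum_j `|A i j| ^+ 2 = 0 by rewrite -frobsqE A0.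
have /psumr_eq0P Aij0 := rowi0 (fun k _ => sumr_ge0 _ (fun l _ => sq_ge0 k l)) i isT.
by apply/eqP; rewrite -normr_eq0 -sqrf_eq0 Aij0.
Qed.

Lemma frobsq0 m n : frobsq (0 : 'M[R[i]]_(m, n)) = 0.
Proof. by apply: complexI; rewrite frobsq_tr mul0mx mxtrace0. Qed.

Lemma frob0 m n : frob (0 : 'M[R[i]]_(m, n)) = 0.
Proof. by apply/eqP; rewrite -sqrf_eq0 -/(frobsq _) frobsq0. Qed.

Lemma frob_le1 m n (A : 'M[R[i]]_(m, n)) : (frob A <= 1) = (frobsq A <= 1).
Proof. by rewrite /frobsq -{2}(expr1n R 2) ler_sqr ?nnegrE ?frob_ge0. Qed.

Lemma frobsq_ctrmx m n (A : 'M[R[i]]_(m, n)) : frobsq (ctrmx A) = frobsq A.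
Proof. by apply: complexI; rewrite !frobsq_tr ctrmxK mxtrace_mulC. Qed.

Lemma frobsqN m n (A : 'M[R[i]]_(m, n)) : frobsq (- A) = frobsq A.
Proof. by apply: complexI; rewrite !frobsq_tr ctrmxN mulNmx mulmxN opprK. Qed.

Lemma frobsqZ m n (c : R[i]) (A : 'M[R[i]]_(m, n)) :
  (frobsq (c *: A))%:C%C = `|c| ^+ 2 * (frobsq A)%:C%C.
Proof. by rewrite !frobsq_tr ctrmxZ -scalemxAl -scalemxAr !mxtraceZ mulrA normCK. Qed.

Lemma frobsqZ_real m n (t : R) (A : 'M[R[i]]_(m, n)) :
  frobsq (t%:C%C *: A) = t ^+ 2 * frobsq A.
Proof.
have t_real : t%:C%C \is Num.real by apply/complex_realP; exists t.
by apply: complexI; rewrite frobsqZ real_normK // -rmorphXn -rmorphM.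
Qed.

Lemma frobsqD_row_orth m n (A B : 'M[R[i]]_(m, n)) :
  A *m ctrmx B = 0 -> frobsq (A + B) = frobsq A + frobsq B.
Proof.
move=> AB0; have BA0 : B *m ctrmx A = 0 by rewrite -[B]ctrmxK -ctrmxM AB0 ctrmx0.
apply: complexI; rewrite [in RHS]rmorphD /= !frobsq_tr ctrmxD mulmxDl !mulmxDr.
by rewrite AB0 BA0 !mxtraceD mxtrace0 add0r addr0.
Qed.

Lemma frobsqD_col_orth m n (A B : 'M[R[i]]_(m, n)) :
  ctrmx A *m B = 0 -> frobsq (A + B) = frobsq A + frobsq B.
Proof. by move=> AB0; rewrite -frobsq_ctrmx ctrmxD frobsqD_row_orth ?ctrmxK ?frobsq_ctrmx. Qed.

Lemma frobsq_cols m n (A : 'M[R[i]]_(m, n)) : frobsq A = \sum_j frobsq (col j A).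
Proof.
apply: complexI; rewrite rmorph_sum /= frobsqE exchange_big; apply: eq_bigr => j _.
by rewrite frobsqE; apply: eq_bigr => i _; rewrite big_ord1 mxE.
Qed.

Lemma frobsq_rows m n (A : 'M[R[i]]_(m, n)) : frobsq A = \sum_i frobsq (row i A).
Proof.
apply: complexI; rewrite rmorph_sum /= frobsqE; apply: eq_bigr => i _.
by rewrite frobsqE big_ord1; apply: eq_bigr => j _; rewrite mxE.
Qed.

Lemma frobsq_mx11 (M : 'M[R[i]]_1) : (frobsq M)%:C%C = `|M 0 0| ^+ 2.
Proof. by rewrite frobsqE !big_ord1. Qed.

Lemma ctrmx_mulmx_self k (v : 'cV[R[i]]_k) : ctrmx v *m v = (frobsq v)%:C%C%:M.
Proof. by rewrite [LHS]mx11_scalar frobsq_tr mxtrace_mulC /mxtrace big_ord1. Qed.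

(* Pythagoras for the orthogonal splitting [u = w + a v] with [a = <v, u> / |v|^2]. *)
Lemma cauchy_schwarz k (u v : 'cV[R[i]]_k) :
  `|(ctrmx u *m v) 0 0| ^+ 2 <= (frobsq u)%:C%C * (frobsq v)%:C%C.
Proof.
have [v0 | v_neq0] := eqVneq v 0.
  by rewrite v0 mulmx0 mxE normr0 expr0n mulr_ge0 ?lecR ?frobsq_ge0.
set fv := (frobsq v)%:C%C.
have fv_gt0 : 0 < fv.
  by rewrite ltcR lt_def frobsq_ge0 andbT; apply: contra v_neq0 => /eqP/frobsq_eq0->.
set d := (ctrmx v *m u) 0 0; pose a := d / fv; pose w := u - a *: v.
have -> : `|(ctrmx u *m v) 0 0| = `|d|.
  by rewrite /d -[u in RHS]ctrmxK -ctrmxM [in RHS]mxE norm_conjC.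
have vw0 : ctrmx v *m w = 0.
  rewrite mulmxBr -scalemxAr ctrmx_mulmx_self [ctrmx v *m u]mx11_scalar -/d -/fv.
  by rewrite scale_scalar_mx /a divfK ?subrr // gt_eqF.
have frob_u : (frobsq u)%:C%C = (frobsq w)%:C%C + `|a| ^+ 2 * fv.
  rewrite -[u](subrK (a *: v)) -/w frobsqD_col_orth; first by rewrite rmorphD /= frobsqZ.
  by rewrite -scalemxAr -[v]ctrmxK -ctrmxM vw0 ctrmx0 scaler0.
have -> : `|d| ^+ 2 = `|a| ^+ 2 * fv * fv.
  rewrite /a normrM normfV (gtr0_norm fv_gt0) exprMn -mulrA -expr2 -mulrA -exprMn.
  by rewrite mulVf ?expr1n ?mulr1 // gt_eqF.
apply: ler_wpM2r; first exact: ltW.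
by rewrite frob_u lerDr lecR frobsq_ge0.
Qed.

Lemma frobsq_mulmx_cV_le m n (X : 'M[R[i]]_(m, n)) (x : 'cV[R[i]]_n) :
  frobsq (X *m x) <= frobsq X * frobsq x.
Proof.
rewrite frobsq_rows (frobsq_rows X) mulr_suml; apply: ler_sum => i _.
have := cauchy_schwarz (ctrmx (row i X)) x.
by rewrite ctrmxK frobsq_ctrmx -row_mul -frobsq_mx11 -rmorphM lecR.
Qed.

End FrobeniusNorm.

Section SpectralNorm.
Variable R : realType.

Lemma spec_has_ubound m n (X : 'M[R[i]]_(m, n)) :
  has_ubound [set frob (X *m x) | x in [set x : 'cV[R[i]]_n | frob x <= 1]]%classic.
Proof.
exists (frob X) => _ [x /= x_le1 <-].
rewrite -ler_frobsq; apply: le_trans (frobsq_mulmx_cV_le X x) _.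
by rewrite ler_piMr ?frobsq_ge0 // exprn_ile1 ?frob_ge0.
Qed.

Lemma frob_mulmx_le_spec m n (X : 'M[R[i]]_(m, n)) (x : 'cV[R[i]]_n) :
  frob x <= 1 -> frob (X *m x) <= spec X.
Proof. by move=> x_le1; apply: ub_le_sup (spec_has_ubound X) _ _; exists x. Qed.

Lemma spec_ge0 m n (X : 'M[R[i]]_(m, n)) : 0 <= spec X.
Proof.
have := @frob_mulmx_le_spec m n X 0; rewrite mulmx0 frob0 => /(_ ler01).
exact: le_trans (frob_ge0 _).
Qed.

Lemma frobsq_mulmx_cV_le_spec m n (X : 'M[R[i]]_(m, n)) (y : 'cV[R[i]]_n) :
  frobsq (X *m y) <= spec X ^+ 2 * frobsq y.
Proof.
have [-> | y_neq0] := eqVneq y 0; first by rewrite mulmx0 !frobsq0 mulr0.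
have t_gt0 : 0 < frobsq y.
  by rewrite lt_def frobsq_ge0 andbT; apply: contra y_neq0 => /eqP/frobsq_eq0->.
pose t := frob y; have t_neq0 : t != 0.
  by apply: contraTneq t_gt0 => t0; rewrite /frobsq -/t t0 expr0n ltxx.
have unit_y : frob (t^-1%:C%C *: y) <= 1.
  by rewrite frob_le1 frobsqZ_real exprVn mulVf ?expf_neq0.
have := frob_mulmx_le_spec X unit_y.
rewrite -ler_sqr ?nnegrE ?frob_ge0 ?spec_ge0 // -/(frobsq _) -scalemxAr frobsqZ_real.
by rewrite exprVn mulrC ler_pdivrMr.
Qed.

Lemma frobsq_mulmxl_le m n p (X : 'M[R[i]]_(m, n)) (Y : 'M[R[i]]_(n, p)) :
  frobsq (X *m Y) <= spec X ^+ 2 * frobsq Y.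
Proof.
rewrite frobsq_cols (frobsq_cols Y) mulr_sumr; apply: ler_sum => j _.
by rewrite !colE -mulmxA frobsq_mulmx_cV_le_spec.
Qed.

Lemma spec_ctrmx_le m n (X : 'M[R[i]]_(m, n)) : spec (ctrmx X) <= spec X.
Proof.
apply: ge_sup; first by exists (frob (ctrmx X *m (0 : 'cV_m))), 0; rewrite //= frob0 ler01.
move=> _ [x /= x_le1 <-]; set y := ctrmx X *m x.
have [-> | y_neq0] := eqVneq y 0; first by rewrite frob0 spec_ge0.
have fy_gt0 : 0 < frobsq y.
  by rewrite lt_def frobsq_ge0 andbT; apply: contra y_neq0 => /eqP/frobsq_eq0->.
have y_inner : (frobsq y)%:C%C = (ctrmx x *m (X *m y)) 0 0.
  have /matrixP/(_ 0 0) := ctrmx_mulmx_self y.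
  rewrite [in X in _ = X -> _]mxE eqxx mulr1n => <-.
  by rewrite /y ctrmxM ctrmxK -mulmxA.
have fy_sq_le : frobsq y ^+ 2 <= frobsq x * frobsq (X *m y).
  have := cauchy_schwarz x (X *m y).
  by rewrite -y_inner ger0_norm ?lecR ?frobsq_ge0 // -rmorphXn -rmorphM lecR.
have : frobsq y ^+ 2 <= spec X ^+ 2 * frobsq y.
  apply: (le_trans fy_sq_le); apply: le_trans (frobsq_mulmx_cV_le_spec X y).
  by rewrite ler_piMl ?frobsq_ge0 // -frob_le1.
by rewrite expr2 ler_pM2r // /frobsq ler_sqr ?nnegrE ?frob_ge0 ?spec_ge0.
Qed.

Lemma frobsq_mulmxr_le m n p (Y : 'M[R[i]]_(m, n)) (X : 'M[R[i]]_(n, p)) :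
  frobsq (Y *m X) <= frobsq Y * spec X ^+ 2.
Proof.
rewrite -frobsq_ctrmx ctrmxM mulrC -(frobsq_ctrmx Y).
apply: le_trans (frobsq_mulmxl_le _ _) _.
by rewrite ler_wpM2r ?frobsq_ge0 // ler_sqr ?nnegrE ?spec_ge0 ?spec_ctrmx_le.
Qed.

End SpectralNorm.

Section PenroseComplements.
Variables (R : rcfType) (m n : nat) (A : 'M[R[i]]_(m, n)) (Ap : 'M[R[i]]_(n, m)).
Hypothesis pinvA : is_pinv A Ap.

Lemma ctrmx_complAAp : ctrmx (1%:M - A *m Ap) = 1%:M - A *m Ap.
Proof. by case: pinvA => _ _ AAp_herm _; rewrite ctrmxB ctrmx1 AAp_herm. Qed.

Lemma ctrmx_complApA : ctrmx (1%:M - Ap *m A) = 1%:M - Ap *m A.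
Proof. by case: pinvA => _ _ _ ApA_herm; rewrite ctrmxB ctrmx1 ApA_herm. Qed.

Lemma complAAp_mul : (1%:M - A *m Ap) *m A = 0.
Proof. by case: pinvA => AApA _ _ _; rewrite mulmxBl mul1mx AApA subrr. Qed.

Lemma pinv_mul_complAAp : Ap *m (1%:M - A *m Ap) = 0.
Proof. by case: pinvA => _ ApAAp _ _; rewrite mulmxBr mulmx1 mulmxA ApAAp subrr. Qed.

Lemma mul_complApA : A *m (1%:M - Ap *m A) = 0.
Proof. by case: pinvA => AApA _ _ _; rewrite mulmxBr mulmx1 mulmxA AApA subrr. Qed.

Lemma complApA_mul_pinv : (1%:M - Ap *m A) *m Ap = 0.
Proof. by case: pinvA => _ ApAAp _ _; rewrite mulmxBl mul1mx ApAAp subrr. Qed.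

End PenroseComplements.

Lemma pinv_sub_decomp (T : pzRingType) m n (A B : 'M[T]_(m, n)) (Ap Bp : 'M[T]_(n, m)) :
  Bp - Ap = - (Bp *m (B - A) *m Ap) + Bp *m (1%:M - A *m Ap) - (1%:M - Bp *m B) *m Ap.
Proof.
rewrite !mulmxBr !mulmxBl !mulmx1 !mul1mx !mulmxA.
by rewrite opprB [_ + (Bp - _)]addrC addrA subrK opprB addrA subrK.
Qed.

Section PinvPerturbation.
Variables (R : realType) (m n : nat) (A B : 'M[R[i]]_(m, n)) (Ap Bp : 'M[R[i]]_(n, m)).
Hypotheses (pinvA : is_pinv A Ap) (pinvB : is_pinv B Bp).

Lemma frobsq_pinv_sub :
  frobsq (Bp - Ap) = frobsq (Bp *m (B - A) *m Ap) + frobsq (Bp *m (1%:M - A *m Ap))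
                     + frobsq ((1%:M - Bp *m B) *m Ap).
Proof.
have Bp_complB : ctrmx Bp *m (1%:M - Bp *m B) = 0.
  by rewrite -(ctrmx_complApA pinvB) -ctrmxM (complApA_mul_pinv pinvB) ctrmx0.
rewrite (pinv_sub_decomp A B) frobsqD_col_orth; last first.
  have -> : - (Bp *m (B - A) *m Ap) + Bp *m (1%:M - A *m Ap)
            = Bp *m (1%:M - A *m Ap - (B - A) *m Ap) by rewrite [RHS]mulmxBr mulmxA addrC.
  by rewrite ctrmxM mulmxN -mulmxA (mulmxA (ctrmx Bp)) Bp_complB mul0mx mulmx0 oppr0.
rewrite frobsqD_row_orth ?frobsqN // mulNmx ctrmxM (ctrmx_complAAp pinvA).
by rewrite -!mulmxA (mulmxA Ap) (pinv_mul_complAAp pinvA) mul0mx !mulmx0 oppr0.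
Qed.

Lemma frobsq_pinv_mulmx_le :
  frobsq (Ap *m (B - A))
  <= spec B ^+ 2 * frobsq (Ap *m (B - A) *m Bp) + spec A ^+ 2 * frobsq ((1%:M - Bp *m B) *m Ap).
Proof.
have split_X : Ap *m (B - A)
               = Ap *m (B - A) *m Bp *m B + Ap *m (B - A) *m (1%:M - Bp *m B).
  by set X := Ap *m (B - A); rewrite mulmxBr mulmx1 -mulmxA addrC subrK.
have X_complB : Ap *m (B - A) *m (1%:M - Bp *m B) = - ctrmx ((1%:M - Bp *m B) *m Ap *m A).
  rewrite -(mulmxA _ Ap A) ctrmxM (ctrmx_complApA pinvB); case: pinvA => _ _ _ ->.
  by rewrite (mulmxBr Ap) mulmxBl -!mulmxA (mul_complApA pinvB) mulmx0 sub0r.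
rewrite [in X in X <= _]split_X X_complB frobsqD_row_orth ?frobsqN ?frobsq_ctrmx; last first.
  rewrite ctrmxN ctrmxK mulmxN -!mulmxA (mulmxA B) (mul_complApA pinvB).
  by rewrite mul0mx !mulmx0 oppr0.
by apply: lerD; rewrite mulrC; apply: frobsq_mulmxr_le.
Qed.

Lemma frobsq_mulmx_pinv_le :
  frobsq ((B - A) *m Bp)
  <= spec A ^+ 2 * frobsq (Ap *m (B - A) *m Bp) + spec B ^+ 2 * frobsq (Bp *m (1%:M - A *m Ap)).
Proof.
have split_Y : (B - A) *m Bp
               = A *m (Ap *m (B - A) *m Bp) + (1%:M - A *m Ap) *m ((B - A) *m Bp).
  by rewrite !mulmxA -!mulmxDl (addrC (A *m Ap)) subrK mul1mx.
have Y_complA : (1%:M - A *m Ap) *m ((B - A) *m Bp) = ctrmx (B *m (Bp *m (1%:M - A *m Ap))).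
  rewrite (mulmxA B) ctrmxM (ctrmx_complAAp pinvA); case: pinvB => _ _ -> _.
  by rewrite (mulmxBl B A) mulmxBr (mulmxA _ A Bp) (complAAp_mul pinvA) mul0mx subr0.
have A_complA : ctrmx A *m (1%:M - A *m Ap) = 0.
  by rewrite -(ctrmx_complAAp pinvA) -ctrmxM (complAAp_mul pinvA) ctrmx0.
rewrite [in X in X <= _]split_Y Y_complA frobsqD_col_orth ?frobsq_ctrmx; last first.
  by rewrite -Y_complA ctrmxM -mulmxA (mulmxA (ctrmx A)) A_complA mul0mx mulmx0.
by apply: lerD; apply: frobsq_mulmxl_le.
Qed.

Lemma frobsq_pinv_sub_ge :
  (frobsq (Ap *m (B - A)) - spec B ^+ 2 * frobsq (Ap *m (B - A) *m Bp)) / spec A ^+ 2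
  + (frobsq ((B - A) *m Bp) - spec A ^+ 2 * frobsq (Ap *m (B - A) *m Bp)) / spec B ^+ 2
  + frobsq (Bp *m (B - A) *m Ap) <= frobsq (Bp - Ap).
Proof.
rewrite frobsq_pinv_sub addrC -[X in _ <= X]addrA lerD2l [X in _ <= X]addrC.
apply: lerD; apply: ler_wpdivrMl; rewrite ?frobsq_ge0 ?exprn_ge0 ?spec_ge0 // lerBlDl.
- exact: frobsq_pinv_mulmx_le.
- exact: frobsq_mulmx_pinv_le.
Qed.

End PinvPerturbation.

Theorem corollary3p8 (R : realType) (m n r s : nat)
  (A B : 'M[R[i]]_(m, n)) (Ap Bp : 'M[R[i]]_(n, m)) :
  \rank A = r -> \rank B = s ->
  is_pinv A Ap -> is_pinv B Bp ->
  let E := B - A in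
  let gamma1 :=
    (frob (Ap *m E) ^+ 2 - spec B ^+ 2 * frob (Ap *m E *m Bp) ^+ 2) / spec A ^+ 2
    + (frob (E *m Bp) ^+ 2 - spec A ^+ 2 * frob (Ap *m E *m Bp) ^+ 2) / spec B ^+ 2 in
  let gamma2 :=
    (frob (E *m Ap) ^+ 2 - spec B ^+ 2 * frob (Bp *m E *m Ap) ^+ 2) / spec A ^+ 2
    + (frob (Bp *m E) ^+ 2 - spec A ^+ 2 * frob (Bp *m E *m Ap) ^+ 2) / spec B ^+ 2 in
  frob (Bp - Ap) ^+ 2 >= Num.max (gamma1 + frob (Bp *m E *m Ap) ^+ 2)
                                 (gamma2 + frob (Ap *m E *m Bp) ^+ 2).
Proof.
move=> _ _ pinvA pinvB; cbv zeta; rewrite ge_max; apply/andP; split.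
  exact: frobsq_pinv_sub_ge.
have := frobsq_pinv_sub_ge pinvB pinvA.
rewrite -(opprB B A) -(opprB Bp Ap) !mulmxN !mulNmx !frobsqN.
by rewrite [X in X + _ <= _]addrC.
Qed.
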